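(* Let $q,K,L,T$ be positive integers and let $\boldsymbol{\alpha}^{(p)}\in\mathbb{Z}_q^K$, $\boldsymbol{\beta}^{(p)}\in\mathbb{Z}_q^L$ be arbitrary. Suppose $\boldsymbol{\alpha}^{(s)}=(b_\alpha+jx_\alpha)_{j=0}^{T-1}\bmod q$ and $\boldsymbol{\beta}^{(s)}=(b_\beta+jx_\beta)_{j=0}^{T-1}\bmod q$ are arithmetic progressions in $\mathbb{Z}_q$ whose common differences $x_\alpha,x_\beta$ are coprime to $q$. Let $N=|\mathcal{TL}\cup\mathcal{TR}\cup\mathcal{BL}\cup\mathcal{BR}|$. Then for every prime $p$ with $q\mid p-1$ there exist $N$ $q$-th roots of unity $\boldsymbol\rho=(\rho_1,\dots,\rho_N)$ in $\mathbb{F}_p$ such that (a) $\mathbf V(\boldsymbol\rho,\boldsymbol\gamma)$ is invertible and (b) all $T\times T$ submatrices of $\mathbf V(\boldsymbol\rho,\boldsymbol{\alpha}^{(s)})$ and of $\mathbf V(\boldsymbol\rho,\boldsymbol{\beta}^{(s)})$ are invertible.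
   Context: $\mathbb{Z}_q$ denotes the integers mod $q$. For a vector $\mathbf v$, $\{\mathbf v\}$ is the set of its entries; sumsets are $\mathcal A+\mathcal B=\{a+b:a\in\mathcal A,b\in\mathcal B\}$ with addition in $\mathbb{Z}_q$. $\mathcal{TL}=\{\boldsymbol{\alpha}^{(p)}\}+\{\boldsymbol{\beta}^{(p)}\}$, $\mathcal{TR}=\{\boldsymbol{\alpha}^{(p)}\}+\{\boldsymbol{\beta}^{(s)}\}$, $\mathcal{BL}=\{\boldsymbol{\alpha}^{(s)}\}+\{\boldsymbol{\beta}^{(p)}\}$, $\mathcal{BR}=\{\boldsymbol{\alpha}^{(s)}\}+\{\boldsymbol{\beta}^{(s)}\}$, and $\boldsymbol\gamma$ lists the elements of $\mathcal{TL}\cup\mathcal{TR}\cup\mathcal{BL}\cup\mathcal{BR}$ in ascending order (identifying $\mathbb{Z}_q$ with $\{0,\dots,q-1\}$). For a vector $\boldsymbol\rho$ of length $n$ of $q$-th roots of unity and $\boldsymbol\delta\in\mathbb{Z}_q^m$, $\mathbf V(\boldsymbol\rho,\boldsymbol\delta)$ is the $n\times m$ matrix with $(i,j)$ entry $\rho_i^{\delta_j}$ (well defined since $\rho_i^q=1$). *)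

From HB Require Import structures.
From mathcomp Require Import all_boot all_order all_algebra.
Set Implicit Arguments. Unset Strict Implicit. Unset Printing Implicit Defensive.
Import GRing.Theory.
Local Open Scope ring_scope.

(* Z_q is represented by the natural numbers 0..q-1; sums are taken mod q. *)

Definition entries n (v : 'I_n -> nat) : seq nat := [seq v i | i <- enum 'I_n].

Definition sumset (q : nat) (A B : seq nat) (c : nat) : bool :=
  has (fun a => has (fun b => ((a + b) %% q)%N == c) B) A.

Definition arith_prog (q T b x : nat) : 'I_T -> nat := fun j => ((b + j * x) %% q)%N.
Arguments arith_prog : clear implicits.

(* gamma: the elements of TL ∪ TR ∪ BL ∪ BR in ascending order *)
Definition gamma_seq (q : nat) (ap bp as_ bs : seq nat) : seq nat :=
  [seq c <- iota 0 q | [|| sumset q ap bp c, sumset q ap bs c,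
                           sumset q as_ bp c | sumset q as_ bs c]].

Definition Vmx (F : nzRingType) n m (rho : 'I_n -> F) (delta : 'I_m -> nat)
  : 'M[F]_(n, m) := \matrix_(i < n, j < m) rho i ^+ delta j.

Definition all_TxT_invertible (F : comUnitRingType) n T (A : 'M[F]_(n, T)) : Prop :=
  forall f : 'I_T -> 'I_n, (forall i j : 'I_T, (i < j)%N -> (f i < f j)%N) ->
    rowsub f A \in unitmx.

From HB Require Import structures.
From mathcomp Require Import all_boot all_order all_algebra.
From mathcomp Require Import cyclic finfield.
Import GRing.Theory.
Local Open Scope ring_scope.

(* Take [rho_i = w^i] for a primitive q-th root of unity [w], which exists in
   F_p since q | p - 1.  Then V(rho, gamma) is the transpose of the Vandermonde
   matrix at the nodes [w^gamma_j], which are distinct because the entries of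
   gamma are distinct residues mod q.  Rows [r_1 < ... < r_T] of
   V(rho, (b + jx)_j) have entries [w^(r_i b) (w^(x r_i))^j]: a Vandermonde
   matrix with nonzero row scalings whose nodes are distinct powers of the
   primitive root [w^x] (x is coprime to q). *)

Lemma scaled_Vandermonde_unitmx (F : fieldType) n (c a : 'I_n -> F) :
  (forall i, c i != 0) -> injective a ->
  \matrix_(i, j) (c i * a i ^+ j) \in unitmx.
Proof.
move=> c_neq0 a_inj.
have ->: \matrix_(i, j) (c i * a i ^+ j)
    = diag_mx (\row_i c i) *m (Vandermonde n (\row_i a i))^T.
  by apply/matrixP => i j; rewrite mul_diag_mx !mxE.
rewrite unitmxE det_mulmx det_diag det_tr det_Vandermonde unitfE mulf_neq0 //.
  by apply/prodf_neq0 => i _; rewrite mxE.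
apply/prodf_neq0 => i _; apply/prodf_neq0 => j lt_ij; rewrite !mxE subr_eq0.
by apply/eqP => /a_inj eq_ji; rewrite eq_ji ltnn in lt_ij.
Qed.

Lemma finField_prim_root_exists (F : finFieldType) n :
  (0 < n)%N -> (n %| #|F|.-1)%N -> exists w : F, n.-primitive_root w.
Proof.
move=> n_gt0 n_dvd.
have cardF : #|F| = (#|F|.-1).+1 by rewrite prednK // (ltn_trans _ (finNzRing_gt1 F)).
have: has (#|F|.-1).-primitive_root (enum (predC1 (0 : F))).
  apply: has_prim_root; last 2 first.
  - exact: enum_uniq.
  - by rewrite -cardE cardC1.
  - by rewrite -ltnS -cardF finNzRing_gt1.
  apply/allP => x; rewrite mem_enum /= => x_neq0; apply/unity_rootP.
  by apply: (mulfI x_neq0); rewrite mulr1 -exprS -cardF expf_card.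
case/hasP => z _ z_prim; exists (z ^+ (#|F|.-1 %/ n)); exact: dvdn_prim_root.
Qed.

Lemma prim_root_expr_inj (R : idomainType) (z : R) q n (k : 'I_n -> nat) :
  q.-primitive_root z -> injective k -> (forall i, k i < q)%N ->
  injective (fun i => z ^+ k i).
Proof.
move=> z_prim k_inj k_lt i j /eqP /=.
by rewrite (eq_prim_root_expr z_prim) !modn_small // => /eqP/k_inj.
Qed.

Lemma Vmx_arith_progE (R : nzRingType) (w : R) q n T b x (k : 'I_n -> nat) :
  w ^+ q = 1 ->
  Vmx (fun i => w ^+ k i) (arith_prog q T b x)
  = \matrix_(i, j) (w ^+ (k i * b) * (w ^+ x ^+ k i) ^+ j).
Proof.
move=> wq; apply/matrixP => i j; rewrite !mxE /arith_prog expr_mod; last first.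
  by rewrite exprAC wq expr1n.
by rewrite -!exprM -exprD mulnDr (mulnC j) [(x * (_ * _))%N]mulnCA.
Qed.

Lemma Vmx_arith_prog_unitmx (F : fieldType) (w : F) q n b x (k : 'I_n -> nat) :
  q.-primitive_root w -> coprime x q -> injective k -> (forall i, k i < q)%N ->
  Vmx (fun i => w ^+ k i) (arith_prog q n b x) \in unitmx.
Proof.
move=> w_prim x_coprime k_inj k_lt.
rewrite Vmx_arith_progE; last exact: prim_expr_order w_prim.
apply: scaled_Vandermonde_unitmx => [i|].
  by rewrite expf_neq0 // (prim_root_eq0 w_prim) -lt0n (leq_ltn_trans _ (k_lt i)).
by apply: prim_root_expr_inj k_inj k_lt; rewrite prim_root_exp_coprime.
Qed.

Lemma all_TxT_invertible_arith_prog (F : fieldType) (w : F) q n T b x :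
  q.-primitive_root w -> coprime x q -> (n <= q)%N ->
  all_TxT_invertible (Vmx (fun i : 'I_n => w ^+ i) (arith_prog q T b x)).
Proof.
move=> w_prim x_coprime n_le_q f f_incr.
have ->: rowsub f (Vmx (fun i : 'I_n => w ^+ i) (arith_prog q T b x))
    = Vmx (fun i => w ^+ f i) (arith_prog q T b x).
  by apply/matrixP => i j; rewrite !mxE.
apply: Vmx_arith_prog_unitmx => // [i j /= eq_fij|i].
  by apply/val_inj/eqP; case: ltngtP => // /f_incr; rewrite eq_fij ltnn.
exact: leq_trans (ltn_ord (f i)) n_le_q.
Qed.

Lemma Vmx_ord_expr_unitmx (F : fieldType) (w : F) q n (d : 'I_n -> nat) :
  q.-primitive_root w -> injective d -> (forall j, d j < q)%N ->
  Vmx (fun i : 'I_n => w ^+ i) d \in unitmx.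
Proof.
move=> w_prim d_inj d_lt.
have ->: Vmx (fun i : 'I_n => w ^+ i) d = (\matrix_(j, i) (1 * (w ^+ d j) ^+ i))^T.
  by apply/matrixP => i j; rewrite !mxE mul1r -!exprM mulnC.
rewrite unitmx_tr; apply: scaled_Vandermonde_unitmx => [i|]; first exact: oner_neq0.
exact: prim_root_expr_inj w_prim d_inj d_lt.
Qed.

Section GammaSeq.

Variables (q : nat) (ap bp as_ bs : seq nat).
Let gam := gamma_seq q ap bp as_ bs.

Lemma gamma_seq_uniq : uniq gam.
Proof. by rewrite filter_uniq ?iota_uniq. Qed.

Lemma gamma_seq_lt c : c \in gam -> (c < q)%N.
Proof. by rewrite mem_filter mem_iota add0n => /andP[]. Qed.

Lemma size_gamma_seq : (size gam <= q)%N.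
Proof. by rewrite size_filter (leq_trans (count_size _ _)) ?size_iota. Qed.

Lemma nth_gamma_seq_inj : injective (fun j : 'I_(size gam) => nth 0%N gam j).
Proof.
by move=> i j /eqP; rewrite nth_uniq ?gamma_seq_uniq // => /eqP/val_inj.
Qed.

End GammaSeq.

Theorem lemma1 (q K L T : nat) (alphap : 'I_K -> 'I_q) (betap : 'I_L -> 'I_q)
  (ba xa bb xb : nat) :
  (0 < q)%N -> (0 < K)%N -> (0 < L)%N -> (0 < T)%N ->
  coprime xa q -> coprime xb q ->
  let AP := entries (fun i => val (alphap i)) in
  let BP := entries (fun i => val (betap i)) in
  let alphas := arith_prog q T ba xa in
  let betas := arith_prog q T bb xb in
  let gam := gamma_seq q AP BP (entries alphas) (entries betas) in
  let N := size gam in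
  forall p : nat, prime p -> (q %| p.-1)%N ->
  exists rho : 'I_N -> 'F_p,
    (forall i, rho i ^+ q = 1) /\
    Vmx rho (fun j : 'I_N => nth 0%N gam j) \in unitmx /\
    all_TxT_invertible (Vmx rho alphas) /\
    all_TxT_invertible (Vmx rho betas).
Proof.
move=> q_gt0 _ _ _ xa_coprime xb_coprime AP BP alphas betas gam N p p_prime q_dvd.
have [w w_prim] : exists w : 'F_p, q.-primitive_root w.
  by apply: finField_prim_root_exists; rewrite // card_Fp.
have N_le_q : (N <= q)%N := size_gamma_seq _ _ _ _ _.
exists (fun i => w ^+ i); split; last split; last split.
- by move=> i; rewrite exprAC (prim_expr_order w_prim) expr1n.
- apply: Vmx_ord_expr_unitmx w_prim (nth_gamma_seq_inj _ _ _ _ _) _ => j.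
  exact/gamma_seq_lt/mem_nth.
- exact: all_TxT_invertible_arith_prog.
- exact: all_TxT_invertible_arith_prog.
Qed.
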